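(* Let $\varepsilon>0$, let $V$ be a probability space, and let $f\colon V\times V\to[0,\infty)$ be a measurable symmetric function. Then there exists a measurable partition $\mathcal P$ of $V$ into at most $2^{32\,\mathbb E f/\varepsilon^2}$ parts such that $$\big\|(f-f_{\mathcal P})\,1_{f_{\mathcal P}\le 1}\big\|_\square\le\varepsilon.$$
   Context: Symmetric means $f(x,y)=f(y,x)$; $\mathbb E f=\mathbb E_{x,y\in V}f(x,y)$ with $x,y$ independent according to the probability measure $\mu$ of $V$. For a partition $\mathcal P$ of $V$, $f_{\mathcal P}$ is defined by $f_{\mathcal P}(x,y)=\frac{1}{\mu(A)\mu(B)}\int_{A\times B}f$ for $(x,y)\in A\times B$, where $A,B$ are parts of $\mathcal P$ (zero-measure parts are ignored). $(f-f_{\mathcal P})1_{f_{\mathcal P}\le1}$ denotes the function equal to $f(x,y)-f_{\mathcal P}(x,y)$ where $f_{\mathcal P}(x,y)\le1$ and $0$ elsewhere. For $h\colon V_1\times V_2\to\mathbb R$ on probability spaces $V_1,V_2$, the cut norm is $\|h\|_\square=\sup_{A\subseteq V_1,B\subseteq V_2}\left|\mathbb E_{x\in V_1,y\in V_2}h(x,y)1_A(x)1_B(y)\right|$, over measurable $A,B$. *)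

From HB Require Import structures.
From mathcomp Require Import all_boot all_order all_algebra.
From mathcomp Require Import all_classical all_reals all_analysis.
Set Implicit Arguments. Unset Strict Implicit. Unset Printing Implicit Defensive.
Import Order.TTheory GRing.Theory Num.Theory.
Local Open Scope classical_set_scope.
Local Open Scope ring_scope.
Local Open Scope ereal_scope.

Section defs.
Context (R : realType) (d : measure_display) (V : measurableType d)
        (P : probability V R).

Definition expect2 (f : V * V -> R) : \bar R :=
  \int[P \x P]_z (f z)%:E.

(* A finite measurable partition of V indexed by 'I_N (parts may be empty). *)
Definition is_meas_partition (N : nat) (A : 'I_N -> set V) : Prop :=
  (forall i, measurable (A i)) /\ trivIset setT A /\ \bigcup_i A i = setT.

(* value of f_P on the cell A i x A j; zero-measure cells are ignored (value 0) *)
Definition cell_avg (f : V * V -> R) (N : nat) (A : 'I_N -> set V)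
  (i j : 'I_N) : \bar R :=
  let m := (fine (P (A i)) * fine (P (A j)))%R in
  if m == 0%R then 0
  else (\int[P \x P]_(z in A i `*` A j) (f z)%:E) * (m^-1)%:E.

(* f_P (possibly +oo when f is not integrable on a cell) *)
Definition fP (f : V * V -> R) (N : nat) (A : 'I_N -> set V) (z : V * V)
  : \bar R :=
  \sum_(i < N) \sum_(j < N) (\1_(A i `*` A j) z)%:E * cell_avg f A i j.

Definition trunc_diff (f : V * V -> R) (N : nat) (A : 'I_N -> set V)
  (z : V * V) : R :=
  if fP f A z <= 1 then (f z - fine (fP f A z))%R else 0%R.

Definition cut_norm (h : V * V -> R) : \bar R :=
  ereal_sup [set `| \int[P \x P]_(z in A `*` B) (h z)%:E |
             | A in [set A | measurable A] & B in [set B | measurable B]].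
End defs.

Definition part_bound (R : realType) (Ef : \bar R) (eps : R) : \bar R :=
  match Ef with
  | EFin r => (2 `^ (32 * r / eps ^+ 2))%:E
  | _ => +oo
  end.

(* Give a finite measurable partition A of V the energy
   sum_(i,j) P(A_i) P(A_j) psi(d_ij), where d_ij is the average of f on A_i x A_j
   and psi(t) = t^2 for t <= 2, 4t - 4 beyond; as psi(t) <= 4t, the energy never
   exceeds 4 E f.  If a rectangle S x T witnesses ||(f - f_P) 1_{f_P <= 1}|| > eps,
   splitting every part of A along S and T (four times as many parts) raises the
   energy by at least eps^2/4: the gain is a weighted sum of Bregman divergences of
   psi, which on the cells with d_ij <= 1 dominate eps |d' - d_ij| - eps^2/4 for the
   finer averages d'.  Hence after j <= 16 E f / eps^2 refinements the cut norm is
   at most eps, with at most 4^j <= 2^(32 E f / eps^2) parts. *)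

From HB Require Import structures.
From mathcomp Require Import all_boot all_order all_algebra.
From mathcomp Require Import all_classical all_reals all_analysis.
From mathcomp Require Import measurable_realfun ring lra.
Import Order.TTheory GRing.Theory Num.Theory.
Set Implicit Arguments. Unset Strict Implicit. Unset Printing Implicit Defensive.
Local Open Scope classical_set_scope.
Local Open Scope ring_scope.
Local Open Scope ereal_scope.

Lemma in_fin_bigsetU (T : Type) (I : finType) (F : I -> set T) (p : pred I) x :
  (\big[setU/set0]_(i | p i) F i) x <-> exists2 i, p i & F i x.
Proof.
rewrite -bigcup_seq_cond; split=> [[i /andP[_ pi] Fi]|[i pi Fi]]; first by exists i.
by exists i => //=; rewrite mem_index_enum.
Qed.

Lemma trivIset_setX (T : Type) (I : Type) (B : I -> set T) : trivIset setT B ->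
  trivIset setT (fun k : I * I => B k.1 `*` B k.2).
Proof.
move=> tB [i1 i2] [j1 j2] _ _ [[x y] [/= [h1 h2] [h3 h4]]].
have -> : i1 = j1 by apply: tB => //; exists x.
by have -> : i2 = j2 by apply: tB => //; exists y.
Qed.

Lemma fin_bigsetU_setX (T : Type) (I : finType) (B : I -> set T) (p q : pred I) :
  (\big[setU/set0]_(i | p i) B i) `*` (\big[setU/set0]_(i | q i) B i) =
  \big[setU/set0]_(k : I * I | p k.1 && q k.2) (B k.1 `*` B k.2).
Proof.
apply/seteqP; split=> [[x y] /= [/in_fin_bigsetU[i pi Bi] /in_fin_bigsetU[j qj Bj]]|].
  by apply/in_fin_bigsetU; exists (i, j) => //=; rewrite pi qj.
by move=> [x y] /in_fin_bigsetU[[i j] /= /andP[pi qj] [Bi Bj]]; split;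
  apply/in_fin_bigsetU; [exists i|exists j].
Qed.

Section fin_bigsetU_integral.
Context d (T : measurableType d) (R : realType) (mu : {measure set T -> \bar R})
  (I : finType) (F : I -> set T) (p : pred I).
Hypotheses (mF : forall i, measurable (F i)) (tF : trivIset setT F).

Lemma ge0_integral_fin_bigsetU (g : T -> \bar R) :
  measurable_fun setT g -> (forall x, 0 <= g x) ->
  \int[mu]_(x in \big[setU/set0]_(i | p i) F i) g x =
  \sum_(i | p i) \int[mu]_(x in F i) g x.
Proof.
move=> mg g0; rewrite -[in LHS]big_filter ge0_integral_bigsetU ?big_filter //.
- by rewrite filter_uniq // index_enum_uniq.
- exact: sub_trivIset tF.
- exact: measurable_funS mg.
Qed.

Lemma integral_fin_bigsetU_EFin (g : T -> R) : measurable_fun setT g ->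
  \int[mu]_(x in \big[setU/set0]_(i | p i) F i) (g x)%:E =
  \sum_(i | p i) \int[mu]_(x in F i) (g x)%:E.
Proof.
move=> mg; rewrite -[in LHS]big_filter integral_bigsetU_EFin ?big_filter //.
- by rewrite filter_uniq // index_enum_uniq.
- exact: sub_trivIset tF.
- by apply/measurable_EFinP; exact: measurable_funS mg.
Qed.

Lemma measure_fin_bigsetU :
  mu (\big[setU/set0]_(i | p i) F i) = \sum_(i | p i) mu (F i).
Proof.
rewrite -[LHS]mul1e -integral_cst; last exact: bigsetU_measurable.
rewrite ge0_integral_fin_bigsetU //; apply: eq_bigr => i _.
by rewrite integral_cst // mul1e.
Qed.

End fin_bigsetU_integral.

Section huber.
Local Open Scope ring_scope.
Variable R : realFieldType.

(* The linear tail gives [huber t <= 4 t], which bounds energies by [4 E f]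
   without assuming f square-integrable. *)
Definition huber (t : R) := if t <= 2 then t ^+ 2 else 4 * t - 4.
Definition huber' (t : R) := if t <= 2 then 2 * t else 4.
Definition huber_bregman (x y : R) := huber x - huber y - huber' y * (x - y).

Lemma huber_ge0 t : 0 <= t -> 0 <= huber t.
Proof. by rewrite /huber => ht; have [h|h] := leP t 2; nra. Qed.

Lemma huber_le t : 0 <= t -> huber t <= 4 * t.
Proof.
rewrite /huber => ht; have [h2|h2] := leP t 2; last lra.
have : 0 <= t * (4 - t) by apply: mulr_ge0; lra.
nra.
Qed.

Lemma huber_bregman_ge0 x y : 0 <= x -> 0 <= y -> 0 <= huber_bregman x y.
Proof.
rewrite /huber_bregman /huber /huber' => hx hy.
have := sqr_ge0 (x - y); have := sqr_ge0 (x - 2); have := sqr_ge0 (y - 2).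
by case: (leP x 2) => ?; case: (leP y 2) => ?; nra.
Qed.

(* On [0, 2] the divergence is [(x - y)^2 >= e |x - y| - e^2/4] (AM-GM); beyond 2
   the linear tail still grows fast enough because [y <= 1]. *)
Lemma huber_bregman_lb x y e : 0 <= x -> 0 <= y -> y <= 1 -> 0 < e -> e <= 1 ->
  e * `|x - y| <= huber_bregman x y + e ^+ 2 / 4.
Proof.
rewrite /huber_bregman /huber /huber' => hx hy hy1 he he1.
have [h2|h2] := leP y 2; last lra.
have [h3|h3] := leP (x - y) 0.
- rewrite ler0_norm //.
  have [h1|h1] := leP x 2; last lra.
  have := sqr_ge0 (y - x - e / 2); nra.
- rewrite gtr0_norm //.
  have [h1|h1] := leP x 2.
    have := sqr_ge0 (x - y - e / 2); nra.
  have : 0 <= (x - 2) * (3 - 2 * y) by apply: mulr_ge0; lra.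
  have : 0 <= (1 - e) * (x - y) by apply: mulr_ge0; lra.
  have : 0 <= (1 - y) * (2 - y) by apply: mulr_ge0; lra.
  nra.
Qed.

End huber.

Lemma ler_sum_andb (R : numDomainType) (I : finType) (P S : pred I) (F : I -> R) :
  (forall i, 0 <= F i)%R -> (\sum_(i | P i && S i) F i <= \sum_(i | P i) F i)%R.
Proof.
move=> F0; rewrite big_mkcondr; apply: ler_sum => i _.
by case: ifP => _ //; exact: F0.
Qed.

(* [K] indexes the cells of a fine partition of a probability space, [J] those of
   a coarser one, and [g] sends each fine cell to the coarse cell containing it;
   [w k] is the measure of the fine cell [k] and [a k] the mass of f on it. *)
Section coarsening.
Local Open Scope ring_scope.
Variables (R : realFieldType) (K J : finType) (g : K -> J) (w a : K -> R).
Hypotheses (w_ge0 : forall k, 0 <= w k) (a_ge0 : forall k, 0 <= a k)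
  (w0_a0 : forall k, w k = 0 -> a k = 0) (w_sum1 : \sum_k w k = 1).

Definition coarse_weight j := \sum_(k | g k == j) w k.
Definition coarse_mass j := \sum_(k | g k == j) a k.
Definition fine_density k := a k / w k.
Definition coarse_density j := coarse_mass j / coarse_weight j.

Local Notation W := coarse_weight.
Local Notation c := fine_density.
Local Notation C := coarse_density.

Let mul_fine_density k : w k * c k = a k.
Proof.
rewrite /fine_density; have [wk0|wk0] := eqVneq (w k) 0; first by rewrite wk0 mul0r w0_a0.
by rewrite mulrC divfK.
Qed.

Let mul_coarse_density j : W j * C j = coarse_mass j.
Proof.
rewrite /coarse_density; have [Wj0|Wj0] := eqVneq (W j) 0; last by rewrite mulrC divfK.
rewrite Wj0 mul0r /coarse_mass big1 // => k /eqP gk; apply: w0_a0.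
by apply: (psumr_eq0P _ Wj0) => [i _|]; [exact: w_ge0|exact/eqP].
Qed.

Let fine_density_ge0 k : 0 <= c k. Proof. by rewrite divr_ge0. Qed.
Let coarse_weight_ge0 j : 0 <= W j. Proof. exact: sumr_ge0. Qed.
Let coarse_density_ge0 j : 0 <= C j. Proof. by rewrite divr_ge0 ?sumr_ge0. Qed.

Definition fine_energy := \sum_k w k * huber (c k).
Definition coarse_energy := \sum_j W j * huber (C j).
Definition bregman_gap := \sum_k w k * huber_bregman (c k) (C (g k)).

(* For a refinement along a rectangle, selected by [S], this is the integral of
   [(f - f_P) 1_{f_P <= 1}] over that rectangle. *)
Definition truncated_defect (S : pred K) := \sum_j
  (if C j <= 1 then \sum_(k | (g k == j) && S k) (a k - C j * w k) else 0).

Lemma fine_energyE : fine_energy = coarse_energy + bregman_gap.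
Proof.
rewrite /fine_energy /coarse_energy /bregman_gap.
rewrite !(partition_big g predT) //= -big_split /=; apply: eq_bigr => j _.
rewrite [X in _ = _ + X](eq_bigr (fun k => w k * huber (c k) -
    (huber (C j) * w k + huber' (C j) * (a k - C j * w k)))); last first.
  by move=> k /eqP <-; rewrite -mul_fine_density /huber_bregman; ring.
rewrite sumrB big_split /= -!mulr_sumr sumrB -mulr_sumr.
by rewrite -/(W j) -/(coarse_mass j) -mul_coarse_density; ring.
Qed.

Lemma truncated_defect_le1 S : `|truncated_defect S| <= 1.
Proof.
apply: (le_trans (ler_norm_sum _ _ _)).
rewrite -[X in _ <= X]w_sum1 (partition_big g predT) //=; apply: ler_sum => j _.
case: ifP => Cj1; last by rewrite normr0 sumr_ge0.
have := coarse_weight_ge0 j; have := ler_sum_andb (fun k => g k == j) S w_ge0.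
have := ler_sum_andb (fun k => g k == j) S a_ge0.
have : 0 <= \sum_(k | (g k == j) && S k) a k by rewrite sumr_ge0.
have : 0 <= \sum_(k | (g k == j) && S k) w k by rewrite sumr_ge0.
have := mul_coarse_density j; have := coarse_density_ge0 j.
rewrite /coarse_mass -/(W j) sumrB -mulr_sumr ler_norml => *.
apply/andP; split; nra.
Qed.

Lemma energy_increment S e : 0 < e -> e < `|truncated_defect S| ->
  coarse_energy + e ^+ 2 / 4 <= fine_energy.
Proof.
move=> e_gt0 e_lt; have e_le1 := ltW (lt_le_trans e_lt (truncated_defect_le1 S)).
rewrite fine_energyE lerD2l.
have gap_ge0 k j : 0 <= w k * huber_bregman (c k) (C j) + e ^+ 2 / 4 * w k.
  apply: addr_ge0; apply: mulr_ge0 => //; first exact: huber_bregman_ge0.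
  by rewrite divr_ge0 // exprn_ge0 // ltW.
suff : e * `|truncated_defect S| <= bregman_gap + e ^+ 2 / 4.
  have : e * e < e * `|truncated_defect S| by rewrite ltr_pM2l.
  nra.
have -> : e ^+ 2 / 4 = \sum_k e ^+ 2 / 4 * w k by rewrite -mulr_sumr w_sum1 mulr1.
rewrite /bregman_gap -big_split /=.
rewrite (partition_big g predT) //=.
apply: (le_trans (ler_wpM2l (ltW e_gt0) (ler_norm_sum _ _ _))).
rewrite mulr_sumr; apply: ler_sum => j _.
case: ifP => Cj1; last by rewrite normr0 mulr0 sumr_ge0.
apply: (le_trans (ler_wpM2l (ltW e_gt0) (ler_norm_sum _ _ _))).
rewrite mulr_sumr.
apply: (le_trans _ (ler_sum_andb (fun k => g k == j) S (fun k => gap_ge0 k (g k)))).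
apply: ler_sum => k /andP[/eqP gkj _]; subst j.
have -> : a k - C (g k) * w k = w k * (c k - C (g k)).
  by rewrite mulrBr mul_fine_density mulrC.
rewrite normrM ger0_norm //.
have := huber_bregman_lb (fine_density_ge0 k) (coarse_density_ge0 (g k)) Cj1 e_gt0 e_le1.
by have := w_ge0 k; nra.
Qed.

End coarsening.

Section cells.
Context (R : realType) (d : measure_display) (V : measurableType d)
  (P : probability V R) (f : V * V -> R).
Hypotheses (mf : measurable_fun setT f) (f_ge0 : forall z, (0 <= f z)%R)
  (f_int : (P \x P).-integrable setT (EFin \o f)).
Local Notation mu := (P \x P).

Definition measurable_partition (I : finType) (A : I -> set V) :=
  [/\ forall i, measurable (A i), trivIset setT A & forall x, exists i, A i x].

Lemma is_meas_partitionP N (A : 'I_N -> set V) :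
  is_meas_partition A <-> measurable_partition A.
Proof.
split=> [[mA [tA cA]]|[mA tA cA]].
  split=> // x; have : (\bigcup_i A i) x by rewrite cA.
  by move=> [i _ Ai]; exists i.
split=> //; split=> //; apply/seteqP; split=> x // _.
by have [i Ai] := cA x; exists i.
Qed.

Lemma measurable_partition_trivial : measurable_partition (fun _ : 'I_1 => setT).
Proof.
split=> //; last by move=> x; exists ord0.
by move=> i j _ _ _; rewrite (ord1 i) (ord1 j).
Qed.

Definition pr (X : set V) : R := fine (P X).
Definition mass (X Y : set V) : R := fine (\int[mu]_(z in X `*` Y) (f z)%:E).

Lemma prE X : measurable X -> P X = (pr X)%:E.
Proof.
move=> mX; rewrite fineK // ge0_fin_numE //.
exact: le_lt_trans (probability_le1 _ mX) (ltry _).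
Qed.

Lemma pr_ge0 X : (0 <= pr X)%R.
Proof. exact: fine_ge0. Qed.

Lemma measure_setX_pr X Y : measurable X -> measurable Y ->
  mu (X `*` Y) = (pr X * pr Y)%:E.
Proof. by move=> mX mY; rewrite product_measure1E // EFinM -!prE. Qed.

Lemma integrable_cst_setX X Y c : measurable X -> measurable Y ->
  mu.-integrable (X `*` Y) (EFin \o cst c).
Proof.
move=> mX mY; apply/integrableP; split; first exact/measurable_EFinP.
rewrite (eq_integral (cst `|c|%:E)) // integral_cst; last exact: measurableX.
rewrite (_ : _ (X `*` Y) = (pr X * pr Y)%:E); last exact: measure_setX_pr.
by rewrite -EFinM ltry.
Qed.

Lemma massE X Y : measurable X -> measurable Y ->
  \int[mu]_(z in X `*` Y) (f z)%:E = (mass X Y)%:E.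
Proof.
move=> mX mY; rewrite fineK //; apply: integrable_fin_num; first exact: measurableX.
by apply: integrableS f_int => //; exact: measurableX.
Qed.

Lemma mass_ge0 X Y : (0 <= mass X Y)%R.
Proof. by rewrite fine_ge0 // integral_ge0 // => z _; rewrite lee_fin. Qed.

Lemma mass_null X Y : measurable X -> measurable Y -> (pr X * pr Y = 0)%R ->
  mass X Y = 0%R.
Proof.
move=> mX mY XY0; rewrite /mass null_set_integral //; first exact: measurableX.
  by apply/measurable_EFinP; exact: measurable_funS mf.
by apply: eq_trans (measure_setX_pr mX mY) _; rewrite XY0.
Qed.

Section fin_bigsetU.
Variables (I : finType) (B : I -> set V).
Hypotheses (mB : forall i, measurable (B i)) (tB : trivIset setT B).

Lemma pr_fin_bigsetU p :
  pr (\big[setU/set0]_(i | p i) B i) = (\sum_(i | p i) pr (B i))%R.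
Proof.
apply: EFin_inj; rewrite -prE; last exact: bigsetU_measurable.
by rewrite (measure_fin_bigsetU P) // -sumEFin; apply: eq_bigr => i _; exact: prE.
Qed.

Lemma mass_fin_bigsetU p q :
  mass (\big[setU/set0]_(i | p i) B i) (\big[setU/set0]_(i | q i) B i) =
  (\sum_(k | p k.1 && q k.2) mass (B k.1) (B k.2))%R.
Proof.
apply: EFin_inj; rewrite -massE; try exact: bigsetU_measurable.
rewrite fin_bigsetU_setX ge0_integral_fin_bigsetU //.
- by rewrite -sumEFin; apply: eq_bigr => k _; rewrite massE.
- by move=> k; apply: measurableX.
- exact: trivIset_setX.
- exact/measurable_EFinP.
Qed.

End fin_bigsetU.

Lemma sum_mass_partition (I : finType) (A : I -> set V) : measurable_partition A ->
  (\sum_(k : I * I) mass (A k.1) (A k.2))%R = fine (expect2 P f).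
Proof.
move=> [mA tA cA].
have AT : \big[setU/set0]_(i | predT i) A i = setT.
  by apply/seteqP; split=> // x _; have [i Ai] := cA x; apply/in_fin_bigsetU; exists i.
by rewrite -(mass_fin_bigsetU mA tA predT predT) AT /mass setXTT.
Qed.

Definition cell_density (I : finType) (A : I -> set V) (k : I * I) : R :=
  (mass (A k.1) (A k.2) / (pr (A k.1) * pr (A k.2)))%R.

Definition energy (I : finType) (A : I -> set V) : R :=
  (\sum_(k : I * I) pr (A k.1) * pr (A k.2) * huber (cell_density A k))%R.

Lemma energy_ge0 (I : finType) (A : I -> set V) : (0 <= energy A)%R.
Proof.
apply: sumr_ge0 => k _; rewrite !mulr_ge0 ?pr_ge0 // huber_ge0 //.
by rewrite divr_ge0 ?mulr_ge0 ?pr_ge0 ?mass_ge0.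
Qed.

Lemma energy_le_expect (I : finType) (A : I -> set V) : measurable_partition A ->
  (energy A <= 4 * fine (expect2 P f))%R.
Proof.
move=> pA; rewrite -(sum_mass_partition pA) mulr_sumr; apply: ler_sum => k _.
rewrite /cell_density; set w := (pr _ * pr _)%R; set a := mass _ _.
have w_ge0 : (0 <= w)%R by rewrite mulr_ge0 ?pr_ge0.
have [->|w_neq0] := eqVneq w 0%R; first by rewrite mul0r mulr_ge0 ?mass_ge0.
apply: le_trans (ler_wpM2l w_ge0 (huber_le (divr_ge0 (mass_ge0 _ _) w_ge0))) _.
by rewrite mulrCA [(w * _)%R]mulrCA divff // mulr1.
Qed.

Lemma cell_unique (I : finType) (A : I -> set V) (k k' : I * I) z :
  trivIset setT A -> (A k.1 `*` A k.2) z -> (A k'.1 `*` A k'.2) z -> k = k'.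
Proof. by move=> tA zk zk'; apply: (trivIset_setX tA) => //; exists z. Qed.

Section on_cells.
Variables (N : nat) (A : 'I_N -> set V).
Hypothesis pA : measurable_partition A.

Lemma fP_cell k z : (A k.1 `*` A k.2) z -> fP P f A z = (cell_density A k)%:E.
Proof.
have [mA tA _] := pA; move=> zk.
rewrite /fP pair_big /= (bigD1 k) //= big1 ?adde0.
- rewrite indicE mem_set // mul1e /cell_avg.
  case: eqP => [XY0|XY0]; first by rewrite /cell_density /pr XY0 invr0 mulr0.
  by rewrite massE // -EFinM.
- move=> k' k'k; rewrite indicE memNset ?mul0e // => zk'.
  by move/eqP: k'k; apply; exact: cell_unique zk' zk.
Qed.

Definition cell_trunc_diff k z : R :=
  if (cell_density A k <= 1)%R then (f z - cell_density A k)%R else 0%R.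

Lemma trunc_diff_cell k z : (A k.1 `*` A k.2) z ->
  trunc_diff P f A z = cell_trunc_diff k z.
Proof. by move=> zk; rewrite /trunc_diff (fP_cell zk) lee_fin. Qed.

Lemma trunc_diffE : trunc_diff P f A =
  (fun z => \sum_(k : 'I_N * 'I_N) \1_(A k.1 `*` A k.2) z * cell_trunc_diff k z)%R.
Proof.
have [_ tA cA] := pA; apply/funext => -[x y].
have [i Ai] := cA x; have [j Aj] := cA y.
have zij : (A (i, j).1 `*` A (i, j).2) (x, y) by [].
rewrite (trunc_diff_cell zij) (bigD1 (i, j)) //= big1 ?addr0.
  by rewrite indicE mem_set // mul1r.
move=> k' k'ij; rewrite indicE memNset ?mul0r // => zk'.
by move/eqP: k'ij; apply; exact: cell_unique zk' zij.
Qed.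

Lemma measurable_trunc_diff : measurable_fun setT (trunc_diff P f A).
Proof.
have [mA _ _] := pA; rewrite trunc_diffE; apply: measurable_sum => k.
apply: measurable_funM; first by apply: measurable_indic; exact: measurableX.
rewrite /cell_trunc_diff; case: (cell_density A k <= 1)%R; last exact: measurable_cst.
exact: measurable_funB.
Qed.

Lemma integral_trunc_diff_setX S1 S2 : measurable S1 -> measurable S2 ->
  \int[mu]_(z in S1 `*` S2) (trunc_diff P f A z)%:E =
  (\sum_(k : 'I_N * 'I_N) if cell_density A k <= 1
     then mass (S1 `&` A k.1) (S2 `&` A k.2)
          - cell_density A k * (pr (S1 `&` A k.1) * pr (S2 `&` A k.2))
     else 0)%:E.
Proof.
have [mA tA cA] := pA; move=> mS1 mS2.
pose D (k : 'I_N * 'I_N) := (S1 `&` A k.1) `*` (S2 `&` A k.2).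
have mD k : measurable (D k) by apply: measurableX; apply: measurableI.
have -> : S1 `*` S2 = \big[setU/set0]_k D k.
  apply/seteqP; split=> [[x y] [/= S1x S2y]|[x y] /in_fin_bigsetU[k _ [[? _] [? _]]] //].
  have [i Ai] := cA x; have [j Aj] := cA y.
  by apply/in_fin_bigsetU; exists (i, j).
rewrite (integral_fin_bigsetU_EFin mu xpredT) //; last 2 first.
- move=> k k' _ _ [z [[[_ Ax] [_ Ay]] [[_ A'x] [_ A'y]]]].
  by apply: (cell_unique (z := z) tA); split.
- exact: measurable_trunc_diff.
rewrite -sumEFin; apply: eq_bigr => k _.
rewrite (eq_integral (fun z => (cell_trunc_diff k z)%:E)); last first.
  by move=> [x y]; rewrite in_setE => -[[_ ?] [_ ?]]; rewrite (trunc_diff_cell (k := k)).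
rewrite /cell_trunc_diff; case: ifP => _; last exact: integral0.
rewrite (eq_integral (fun z => (f z)%:E - (cst (cell_density A k) z)%:E)) //.
rewrite integralB_EFin //; last 2 first.
- exact: integrableS f_int.
- by apply: integrable_cst_setX; exact: measurableI.
rewrite massE; try exact: measurableI.
rewrite (eq_integral (cst (cell_density A k)%:E)) // integral_cst //.
rewrite (_ : _ (D k) = (pr (S1 `&` A k.1) * pr (S2 `&` A k.2))%:E).
  by rewrite -EFinM -EFinB.
by apply: measure_setX_pr; exact: measurableI.
Qed.

End on_cells.
End cells.

Section refinement.
Context (R : realType) (d : measure_display) (V : measurableType d)
  (P : probability V R) (f : V * V -> R).
Hypotheses (mf : measurable_fun setT f) (f_ge0 : forall z, (0 <= f z)%R)
  (f_int : (P \x P).-integrable setT (EFin \o f)).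

Section refine.
Variables (N : nat) (A : 'I_N -> set V) (S1 S2 : set V).
Hypotheses (pA : measurable_partition A) (mS1 : measurable S1) (mS2 : measurable S2).

Definition refinement (u : 'I_N * bool * bool) : set V :=
  A u.1.1 `&` (if u.1.2 then S1 else ~` S1) `&` (if u.2 then S2 else ~` S2).
Local Notation B := refinement.

Lemma refinement_asbool i x : A i x -> B (i, `[< S1 x >], `[< S2 x >]) x.
Proof. by move=> Ai; split; [split|] => //=; case: asboolP. Qed.

Lemma refinement_partition : measurable_partition B.
Proof.
have [mA tA cA] := pA; split.
- move=> [[i s] t]; apply: measurableI; first apply: measurableI => //.
  + by case: s => //; exact: measurableC.
  + by case: t => //; exact: measurableC.
- move=> [[i s] t] [[i' s'] t'] _ _ [x [[[Ax S1x] S2x] [[A'x S1'x] S2'x]]].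
  have <- : i = i' by apply: tA => //; exists x.
  move: S1x S2x S1'x S2'x => /=; clear Ax A'x.
  by case: s; case: s'; case: t; case: t'.
- by move=> x; have [i Ai] := cA x; exists (i, `[< S1 x >], `[< S2 x >]);
    exact: refinement_asbool.
Qed.

Let mB u : measurable (B u). Proof. by have [] := refinement_partition. Qed.
Let tB : trivIset setT B. Proof. by have [] := refinement_partition. Qed.

Lemma refinement_bigsetU_parent i : A i = \big[setU/set0]_(u | u.1.1 == i) B u.
Proof.
apply/seteqP; split=> [x Ai|x /in_fin_bigsetU[[[j s] t] /= /eqP <- [[]]] //].
apply/in_fin_bigsetU; exists (i, `[< S1 x >], `[< S2 x >]) => //=.
exact: refinement_asbool.
Qed.

Lemma refinement_bigsetU_left i :
  S1 `&` A i = \big[setU/set0]_(u | (u.1.1 == i) && u.1.2) B u.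
Proof.
apply/seteqP; split=> [x [S1x Ai]|x].
  apply/in_fin_bigsetU; exists (i, `[< S1 x >], `[< S2 x >]).
    by rewrite /= eqxx asboolT.
  exact: refinement_asbool.
by move=> /in_fin_bigsetU[[[j s] t] /= /andP[/eqP <- ->] [[]]].
Qed.

Lemma refinement_bigsetU_right i :
  S2 `&` A i = \big[setU/set0]_(u | (u.1.1 == i) && u.2) B u.
Proof.
apply/seteqP; split=> [x [S2x Ai]|x].
  apply/in_fin_bigsetU; exists (i, `[< S1 x >], `[< S2 x >]).
    by rewrite /= eqxx asboolT.
  exact: refinement_asbool.
by move=> /in_fin_bigsetU[[[j s] t] /= /andP[/eqP <- ->] [[]]].
Qed.

Local Notation K := (('I_N * bool * bool) * ('I_N * bool * bool))%type.
Definition parent_cell (k : K) : 'I_N * 'I_N := (k.1.1.1, k.2.1.1).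
Definition refined_weight (k : K) : R := (pr P (B k.1) * pr P (B k.2))%R.
Definition refined_mass (k : K) : R := mass P f (B k.1) (B k.2).
Definition in_rectangle (k : K) : bool := k.1.1.2 && k.2.2.

Lemma pr_refinement_setX (p q : pred ('I_N * bool * bool)) :
  (pr P (\big[setU/set0]_(u | p u) B u) * pr P (\big[setU/set0]_(u | q u) B u) =
  \sum_(k : K | p k.1 && q k.2) refined_weight k)%R.
Proof. by rewrite !(pr_fin_bigsetU _ mB tB) big_distrlr /= pair_big_dep. Qed.

Lemma refined_weight_sum1 : (\sum_k refined_weight k = 1)%R.
Proof.
have [_ _ cB] := refinement_partition.
have BT : \big[setU/set0]_(u | predT u) B u = setT.
  by apply/seteqP; split=> // x _; have [u Bu] := cB x; apply/in_fin_bigsetU; exists u.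
have := pr_refinement_setX predT predT; rewrite BT => <-.
by rewrite /pr probability_setT mulr1.
Qed.

Lemma coarse_weight_refinement j :
  coarse_weight parent_cell refined_weight j = (pr P (A j.1) * pr P (A j.2))%R.
Proof.
case: j => j1 j2; rewrite !refinement_bigsetU_parent pr_refinement_setX.
by apply: eq_bigl => k; rewrite /parent_cell xpair_eqE.
Qed.

Lemma coarse_mass_refinement j :
  coarse_mass parent_cell refined_mass j = mass P f (A j.1) (A j.2).
Proof.
case: j => j1 j2.
rewrite !refinement_bigsetU_parent (mass_fin_bigsetU mf f_ge0 f_int mB tB).
by apply: eq_bigl => k; rewrite /parent_cell xpair_eqE.
Qed.

Lemma coarse_density_refinement j :
  coarse_density parent_cell refined_weight refined_mass j = cell_density P f A j.
Proof. by rewrite /coarse_density coarse_mass_refinement coarse_weight_refinement. Qed.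

Lemma coarse_energy_refinement :
  coarse_energy parent_cell refined_weight refined_mass = energy P f A.
Proof.
apply: eq_bigr => j _.
by rewrite coarse_weight_refinement coarse_density_refinement.
Qed.

Lemma truncated_defect_refinement :
  truncated_defect parent_cell refined_weight refined_mass in_rectangle =
  (\sum_(k : 'I_N * 'I_N) if cell_density P f A k <= 1
     then mass P f (S1 `&` A k.1) (S2 `&` A k.2)
          - cell_density P f A k * (pr P (S1 `&` A k.1) * pr P (S2 `&` A k.2))
     else 0)%R.
Proof.
apply: eq_bigr => -[j1 j2] _; rewrite coarse_density_refinement; case: ifP => // _.
rewrite sumrB -mulr_sumr refinement_bigsetU_left refinement_bigsetU_right.
rewrite pr_refinement_setX (mass_fin_bigsetU mf f_ge0 f_int mB tB).
have sel k : (parent_cell k == (j1, j2)) && in_rectangle k =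
    ((k.1.1.1 == j1) && k.1.1.2) && ((k.2.1.1 == j2) && k.2.2).
  by rewrite /parent_cell /in_rectangle xpair_eqE;
    case: (_ == _); case: (_ == _); case: k.1.1.2.
by rewrite !(eq_bigl _ _ sel).
Qed.

Lemma refinement_energy_increment e : (0 < e)%R ->
  e%:E < `| \int[P \x P]_(z in S1 `*` S2) (trunc_diff P f A z)%:E | ->
  (energy P f A + e ^+ 2 / 4 <= energy P f B)%R.
Proof.
move=> e_gt0; rewrite integral_trunc_diff_setX // abse_EFin lte_fin.
rewrite -truncated_defect_refinement -coarse_energy_refinement.
apply: energy_increment => //.
- by move=> k; rewrite mulr_ge0 ?pr_ge0.
- by move=> k; exact: mass_ge0.
- by move=> k; exact: mass_null.
- exact: refined_weight_sum1.
Qed.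

End refine.

Lemma measurable_partition_enum_val (I : finType) (A : I -> set V) :
  measurable_partition A -> measurable_partition (A \o @enum_val I predT).
Proof.
move=> [mA tA cA]; split=> [i|i j _ _ [x [Ai Aj]]|x] /=; first exact: mA.
  by apply: enum_val_inj; apply: tA => //; exists x.
by have [i Ai] := cA x; exists (enum_rank i); rewrite enum_rankK.
Qed.

Lemma energy_enum_val (I : finType) (A : I -> set V) :
  energy P f (A \o @enum_val I predT) = energy P f A.
Proof.
rewrite /energy (reindex (fun k : 'I_#|I| * 'I_#|I| => (enum_val k.1, enum_val k.2))) //=.
apply: onW_bij; exists (fun k : I * I => (enum_rank k.1, enum_rank k.2)).
- by move=> [i j] /=; rewrite !enum_valK.
- by move=> [u v] /=; rewrite !enum_rankK.
Qed.

Lemma refine_partition N (A : 'I_N -> set V) e : measurable_partition A ->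
  (0 < e)%R -> ~ cut_norm P (trunc_diff P f A) <= e%:E ->
  exists A' : 'I_(N * 4) -> set V,
    measurable_partition A' /\ (energy P f A + e ^+ 2 / 4 <= energy P f A')%R.
Proof.
move=> pA e_gt0 /negP; rewrite -ltNge => /ereal_sup_gt[_ [S1 mS1 [S2 mS2 <-]] cutS].
have cardK : #|{: 'I_N * bool * bool}| = (N * 4)%N.
  by rewrite !card_prod card_ord card_bool -mulnA.
rewrite -cardK; exists (refinement A S1 S2 \o @enum_val _ predT); split.
  exact/measurable_partition_enum_val/refinement_partition.
by rewrite energy_enum_val; exact: refinement_energy_increment.
Qed.

End refinement.

Section regularity.
Context (R : realType) (d : measure_display) (V : measurableType d)
  (P : probability V R) (f : V * V -> R).
Hypotheses (mf : measurable_fun setT f) (f_ge0 : forall z, (0 <= f z)%R)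
  (f_int : (P \x P).-integrable setT (EFin \o f)).
Variable e : R.
Hypothesis e_gt0 : (0 < e)%R.

Lemma regular_partition_energy : exists j N (A : 'I_N -> set V),
  [/\ measurable_partition A, (N <= 4 ^ j)%N,
      (j%:R * (e ^+ 2 / 4) <= energy P f A)%R &
      cut_norm P (trunc_diff P f A) <= e%:E].
Proof.
(* Otherwise every partition refines, and [k] rounds push the energy past [4 E f]. *)
apply: contrapT => no_regular.
have grow k : exists N (A : 'I_N -> set V), [/\ measurable_partition A,
    (N <= 4 ^ k)%N & (k%:R * (e ^+ 2 / 4) <= energy P f A)%R].
  elim: k => [|k [N [A [pA NA EA]]]].
    exists 1%N, (fun _ => setT); split=> //; first exact: measurable_partition_trivial.
    by rewrite mul0r energy_ge0.
  have cutA : ~ cut_norm P (trunc_diff P f A) <= e%:E.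
    by move=> cutA; apply: no_regular; exists k, N, A.
  have [A' [pA' EA']] := refine_partition mf f_ge0 f_int pA e_gt0 cutA.
  exists (N * 4)%N, A'; split=> //; first by rewrite expnSr leq_mul2r NA orbT.
  by apply: le_trans EA'; rewrite -addn1 natrD mulrDl mul1r lerD2r.
have dl_gt0 : (0 < e ^+ 2 / 4)%R by rewrite divr_gt0 // exprn_gt0.
pose k := (Num.truncn (4 * fine (expect2 P f) / (e ^+ 2 / 4))).+1.
have [N [A [pA _ EA]]] := grow k.
have := le_trans EA (energy_le_expect mf f_ge0 f_int pA).
by rewrite -ler_pdivlMr // leNgt truncnS_gt.
Qed.

Lemma regular_partition : exists N (A : 'I_N -> set V),
  [/\ is_meas_partition A,
      (N%:R <= 2 `^ (32 * fine (expect2 P f) / e ^+ 2))%R &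
      cut_norm P (trunc_diff P f A) <= e%:E].
Proof.
have [j [N [A [pA NA EA cutA]]]] := regular_partition_energy.
exists N, A; split=> //; first exact/is_meas_partitionP.
have EA4 := le_trans EA (energy_le_expect mf f_ge0 f_int pA).
apply: le_trans (_ : (4 ^ j)%N%:R <= _)%R; first by rewrite ler_nat.
have -> : ((4 ^ j)%N%:R = 2 `^ (2 * j)%N%:R :> R)%R.
  by rewrite powR_mulrn ?ler0n // exprM natrX expr2 -natrM.
apply: ler_powR; first by rewrite ler1n.
by rewrite ler_pdivlMr ?exprn_gt0 // natrM; nra.
Qed.

End regularity.

(* With [E f = +oo] the single cell has average [+oo > 1], so nothing survives
   the truncation. *)
Lemma trunc_diff_trivial_partition (R : realType) d (V : measurableType d)
    (P : probability V R) (f : V * V -> R) :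
  expect2 P f = +oo -> trunc_diff P f (fun _ : 'I_1 => setT) = fun _ => 0%R.
Proof.
move=> Ef_oo; apply/funext => z; rewrite /trunc_diff /fP !big_ord1.
rewrite indicE mem_set // mul1e /cell_avg probability_setT /= mulr1 oner_eq0.
by rewrite setXTT -/(expect2 P f) Ef_oo invr1 mule1.
Qed.

Theorem theorem2p2 (R : realType) (eps : R) (d : measure_display)
  (V : measurableType d) (P : probability V R) (f : V * V -> R) :
  (0 < eps)%R ->
  measurable_fun setT f ->
  (forall z, (0 <= f z)%R) ->
  (forall x y, f (x, y) = f (y, x)) ->
  exists (N : nat) (A : 'I_N -> set V),
    is_meas_partition A /\
    (N%:R)%:E <= part_bound (expect2 P f) eps /\
    cut_norm P (trunc_diff P f A) <= eps%:E.
Proof.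
move=> eps_gt0 mf f_ge0 _.
have Ef_ge0 : 0 <= expect2 P f by apply: integral_ge0 => z _; rewrite lee_fin.
case Ef: (expect2 P f) Ef_ge0 => [r| |] // _.
- have f_int : (P \x P).-integrable setT (EFin \o f).
    apply/integrableP; split; first exact/measurable_EFinP.
    under eq_integral do rewrite abse_EFin ger0_norm //.
    by rewrite -/(expect2 P f) Ef ltry.
  have [N [A [pA NA cutA]]] := regular_partition mf f_ge0 f_int eps_gt0.
  by exists N, A; rewrite /part_bound lee_fin -[r]/(fine (r%:E)) -Ef.
- exists 1%N, (fun _ => setT); split; first exact/is_meas_partitionP/measurable_partition_trivial.
  split; first exact: leey.
  rewrite trunc_diff_trivial_partition //; apply: ge_ereal_sup => _ [S1 _ [S2 _ <-]].
  by rewrite integral0 abse0 lee_fin ltW.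
Qed.
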